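(* If $G=(V,E)$ is not observable and $|V|\ge 2$, then for any player algorithm (for the online learning problem with feedback graph $G$) there exists a sequence of loss functions $\ell_1,\ell_2,\dots:V\to[0,1]$ such that the player's expected regret after $T$ rounds is at least $\tfrac14 T$.
   Context: Let $G=(V,E)$ be a directed graph (self-loops allowed), $N^{\mathrm{in}}(i)=\{j:(j,i)\in E\}$, $N^{\mathrm{out}}(i)=\{j:(i,j)\in E\}$. $G$ is observable if $N^{\mathrm{in}}(i)\neq\emptyset$ for every $i\in V$. Online learning with feedback graph $G$: the environment fixes in advance losses $\ell_t:V\to[0,1]$; on round $t$ the player (possibly randomly) chooses $I_t\in V$ based on past observations, incurs $\ell_t(I_t)$, and observes only $\{(j,\ell_t(j)):j\in N^{\mathrm{out}}(I_t)\}$. The expected regret after $T$ rounds is $\mathbb{E}[\sum_{t=1}^T\ell_t(I_t)]-\min_{i\in V}\sum_{t=1}^T\ell_t(i)$. *)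

From mathcomp Require Import all_boot all_order all_algebra.
Set Implicit Arguments. Unset Strict Implicit. Unset Printing Implicit Defensive.
Import Order.TTheory GRing.Theory Num.Theory.
Local Open Scope ring_scope.

(* A directed graph G = (V, E) with self-loops allowed: V a finite type,
   E : rel V, (j, i) \in E  iff  E j i. *)

Definition observable (V : finType) (E : rel V) : Prop :=
  forall i : V, exists j : V, E j i.

Definition loss_seq (R : realFieldType) (V : finType) := nat -> V -> R.

Definition valid_losses (R : realFieldType) (V : finType) (l : loss_seq R V) :=
  forall t v, 0 <= l t v <= 1.

(* What the player sees after a round: its own action I_t together with the
   feedback {(j, l_t(j)) : j \in N_out(I_t)}, encoded as a partial function
   (Some (l_t j) if (I_t, j) \in E, None otherwise). *)
Definition obs (R : realFieldType) (V : finType) := (V * (V -> option R))%type.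

Definition feedback (R : realFieldType) (V : finType) (E : rel V)
  (l : loss_seq R V) (t : nat) (v : V) : V -> option R :=
  fun j => if E v j then Some (l t j) else None.

(* A (randomized) player algorithm: given the history of past observations,
   a probability distribution over V for the next action. *)
Definition player (R : realFieldType) (V : finType) :=
  seq (obs R V) -> V -> R.

Definition valid_player (R : realFieldType) (V : finType) (p : player R V) :=
  (forall h v, 0 <= p h v) /\ (forall h, \sum_(v : V) p h v = 1).

Fixpoint exp_loss (R : realFieldType) (V : finType) (E : rel V)
  (p : player R V) (l : loss_seq R V) (n : nat) (h : seq (obs R V)) : R :=
  match n with
  | 0 => 0
  | n'.+1 =>
      \sum_(v : V) p h v *
        (l (size h).+1 v
         + exp_loss E p l n' (rcons h (v, feedback E l (size h).+1 v)))
  end.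

Definition cum_loss (R : realFieldType) (V : finType) (l : loss_seq R V)
  (T : nat) (i : V) : R := \sum_(1 <= t < T.+1) l t i.

(* min_{i in V} cum_loss l T i.  The seed T%:R is harmless for losses in
   [0,1] on a nonempty V, since then every cum_loss is <= T. *)
Definition best_loss (R : realFieldType) (V : finType) (l : loss_seq R V)
  (T : nat) : R := \big[Num.min/T%:R]_(i : V) cum_loss l T i.

Definition regret (R : realFieldType) (V : finType) (E : rel V)
  (p : player R V) (l : loss_seq R V) (T : nat) : R :=
  exp_loss E p l T [::] - best_loss l T.

(* If no vertex sees the vertex i, the player cannot tell apart the loss
   sequence putting 0 on i from the one putting 1 on i (1/2 everywhere else):
   the feedback, hence the whole history, is the same under both.  Since the
   two losses of every vertex sum to 1, the expected losses of the player
   under the two sequences sum to T, while the best fixed actions (i in the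
   first case, any other vertex in the second) lose 0 and T/2.  So the two
   regrets sum to at least T/2 and one of them is at least T/4. *)

From mathcomp Require Import all_boot all_order all_algebra.
From mathcomp Require Import lra.
From Stdlib Require Import Classical FunctionalExtensionality.
Import Order.TTheory GRing.Theory Num.Theory.
Local Open Scope ring_scope.

Lemma not_observableP {V : finType} {E : rel V} :
  ~ observable E -> exists i : V, forall j, ~~ E j i.
Proof.
move=> nobs; apply: NNPP => no_unseen; apply: nobs => i.
apply: NNPP => unseen_i; apply: no_unseen; exists i => j.
by apply/negP => Eji; apply: unseen_i; exists j.
Qed.

Lemma exists_other_vertex {V : finType} (i : V) :
  (2 <= #|V|)%N -> exists k : V, k != i.
Proof.
move=> cardV; have : (0 < #|predC1 i|)%N by rewrite cardC1; case: #|V| cardV => [|[]].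
by case/card_gt0P => k; exists k.
Qed.

Section Indistinguishable.

Context {R : realFieldType} {V : finType} {E : rel V} {p : player R V}.
Hypothesis p_valid : valid_player p.

Lemma feedback_eq {l l' : loss_seq R V} {t v} :
  (forall j, E v j -> l t j = l' t j) ->
  feedback E l t v = feedback E l' t v.
Proof.
move=> agree; apply: functional_extensionality => j; rewrite /feedback.
by case: ifP => // /agree ->.
Qed.

Lemma exp_loss_complementary {l l' : loss_seq R V} {c : R} :
  (forall t v j, E v j -> l t j = l' t j) ->
  (forall t v, l t v + l' t v = c) ->
  forall n h, exp_loss E p l n h + exp_loss E p l' n h = n%:R * c.
Proof.
move=> agree sum_c; elim=> [|n IH] h /=; first by rewrite addr0 mul0r.
rewrite -big_split /= (eq_bigr (fun v => p h v * (c + n%:R * c))).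
  by rewrite -mulr_suml p_valid.2 mul1r mulrSr mulrDl mul1r addrC.
by move=> v _; rewrite -mulrDr addrACA (feedback_eq (agree _ v)) IH sum_c.
Qed.

End Indistinguishable.

Lemma best_loss_le {R : realFieldType} {V : finType} (l : loss_seq R V) T j :
  best_loss l T <= cum_loss l T j.
Proof. by rewrite /best_loss (bigD1 j) //= ge_min lexx. Qed.

Definition spike_loss {R : realFieldType} {V : finType} (i : V) (a : R) :
  loss_seq R V := fun _ v => if v == i then a else 2^-1.

Section SpikeLoss.

Context {R : realFieldType} {V : finType} (i : V).

Lemma spike_loss_valid (a : R) : 0 <= a <= 1 -> valid_losses (spike_loss i a).
Proof.
move=> a01 t v; rewrite /spike_loss; case: ifP => // _.
by rewrite invr_ge0 ler0n invf_le1 ?ler1n.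
Qed.

Lemma cum_spike_loss_at (a : R) T : cum_loss (spike_loss i a) T i = T%:R * a.
Proof.
by rewrite /cum_loss /spike_loss eqxx sumr_const_nat subn1 mulr_natl.
Qed.

Lemma cum_spike_loss_off (a : R) T k :
  k != i -> cum_loss (spike_loss i a) T k = T%:R / 2.
Proof.
by move=> /negbTE ki; rewrite /cum_loss /spike_loss ki sumr_const_nat subn1 mulr_natl.
Qed.

Lemma spike_loss_complementary t v :
  spike_loss i 0 t v + spike_loss i 1 t v = 1 :> R.
Proof. by rewrite /spike_loss; case: ifP => _; rewrite ?add0r // {3}(splitr 1) mul1r. Qed.

End SpikeLoss.

Lemma regret_spike_sum {R : realFieldType} {V : finType} {E : rel V}
    {p : player R V} {i k : V} T :
  valid_player p -> (forall j, ~~ E j i) -> k != i ->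
  T%:R / 2 <= regret E p (spike_loss i 0) T + regret E p (spike_loss i 1) T.
Proof.
move=> p_valid unseen ki.
have agree t v j : E v j -> spike_loss i 0 t j = spike_loss i (1 : R) t j.
  by rewrite /spike_loss; case: eqP => // -> Evi; move: (unseen v); rewrite Evi.
have sumT := exp_loss_complementary p_valid agree
  (spike_loss_complementary i) T [::].
have best0 := best_loss_le (spike_loss i (0 : R)) T i.
have best1 := best_loss_le (spike_loss i (1 : R)) T k.
rewrite cum_spike_loss_at mulr0 in best0.
rewrite cum_spike_loss_off // in best1.
rewrite mulr1 in sumT; rewrite /regret; lra.
Qed.

Theorem theorem6 (R : realFieldType) (V : finType) (E : rel V) :
  ~ observable E -> (2 <= #|V|)%N ->
  forall p : player R V, valid_player p ->
  forall T : nat,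
  exists l : loss_seq R V, valid_losses l /\
    T%:R / 4 <= regret E p l T.
Proof.
move=> nobs cardV p p_valid T.
have [i unseen] := not_observableP nobs.
have [k ki] := exists_other_vertex i cardV.
have := regret_spike_sum T p_valid unseen ki.
have [le_r0|lt_r0] := lerP (T%:R / 4) (regret E p (spike_loss i 0) T) => sum_r.
  by exists (spike_loss i 0); split=> //; apply: spike_loss_valid; rewrite lexx ler01.
exists (spike_loss i 1); split; first by apply: spike_loss_valid; rewrite ler01 lexx.
lra.
Qed.
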